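(* Let $\mathcal G=\{U_a\}_{a=1}^{|\mathcal G|}$ be a finite group of unitary operators on a finite-dimensional Hilbert space $\mathcal H_A$, let $\Delta(\rho)=\frac{1}{|\mathcal G|}\sum_{a=1}^{|\mathcal G|}U_a\rho U_a^\dagger$ be the $\mathcal G$-twirling map, and let $\mathcal F(A)=\{\Delta(\rho):\rho\in\mathcal D(\mathcal H_A)\}$. Then $\mathcal F(A)$ is affine, $\Delta$ is a resource-destroying map for $\mathcal F(A)$, and for every $N\ge1$, with $\mathcal F(A_1\dots A_N)=\mathrm{Aff}(\mathcal F(A)^{\otimes N})$, there is no $\rho\in\mathcal D(\mathcal H_A^{\otimes N})$ with $\rho\notin\mathcal F(A_1\dots A_N)$ and $\Delta^{\otimes N}(\rho)=\rho$.
   Context: $\mathcal D(\mathcal H)$ denotes the density operators on $\mathcal H$. For $S\subseteq\mathcal D(\mathcal H)$, $\mathrm{Aff}(S)=\{\sum_a t_a\sigma_a:\ \text{finitely many }\sigma_a\in S,\ t_a\in\mathbb R,\ \sum_a t_a=1\}\cap\mathcal D(\mathcal H)$; $S$ is affine if $\mathrm{Aff}(S)=S$; $S^{\otimes N}=\{\rho_1\otimes\dots\otimes\rho_N:\rho_a\in S\}$. A resource-destroying map for $\mathcal F(A)$ is a completely positive trace-preserving linear map $\Delta$ with $\Delta(\rho)\in\mathcal F(A)$ for all $\rho\in\mathcal D(\mathcal H_A)$ and $\Delta(\sigma)=\sigma$ for all $\sigma\in\mathcal F(A)$. *)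

(* Complex scalars: an arbitrary numClosedFieldType C
   (e.g. the complex numbers); operators on H = C^d are 'M[C]_d. *)
From HB Require Import structures.
From mathcomp Require Import all_boot all_order all_algebra.
From mathcomp Require Import sesquilinear spectral.
From mathcomp Require mxtens.

Set Implicit Arguments.
Unset Strict Implicit.
Unset Printing Implicit Defensive.

Import Order.TTheory GRing.Theory Num.Theory.
Local Open Scope ring_scope.
Local Open Scope sesquilinear_scope.

Section QDefs.
Variable C : numClosedFieldType.

Definition dag (m n : nat) (A : 'M[C]_(m, n)) : 'M[C]_(n, m) := A ^t*.

Definition psd (n : nat) (A : 'M[C]_n) : Prop :=
  dag A = A /\ forall v : 'rV[C]_n, 0 <= (v *m A *m dag v) 0 0.

Definition density (n : nat) (A : 'M[C]_n) : Prop := psd A /\ \tr A = 1.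

Definition tens (m p : nat) (A : 'M[C]_m) (B : 'M[C]_p) : 'M[C]_(m * p) :=
  mxtens.tensmx A B.

Fixpoint dpow (d N : nat) : nat := if N is N'.+1 then (d * dpow d N')%N else 1%N.

Lemma dpowE d N : dpow d N = (d ^ N)%N.
Proof. by elim: N => //= N ->; rewrite expnS. Qed.

Fixpoint tensTup (d N : nat) : N.-tuple 'M[C]_d -> 'M[C]_(dpow d N) :=
  match N return N.-tuple 'M[C]_d -> 'M[C]_(dpow d N) with
  | 0 => fun _ => 1%:M
  | N'.+1 => fun t => tens (thead t) (@tensTup d N' (behead_tuple t))
  end.

Definition tensPowSet (d N : nat) (S : 'M[C]_d -> Prop) : 'M[C]_(dpow d N) -> Prop :=
  fun X => exists t : N.-tuple 'M[C]_d,
    (forall i, S (tnth t i)) /\ X = tensTup t.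

Definition Aff (n : nat) (S : 'M[C]_n -> Prop) : 'M[C]_n -> Prop :=
  fun X => density X /\
    exists (k : nat) (c : 'I_k -> C) (s : 'I_k -> 'M[C]_n),
      (forall i, c i \is Num.real) /\ (forall i, S (s i)) /\
      \sum_(i < k) c i = 1 /\ X = \sum_(i < k) c i *: s i.

Definition affine (n : nat) (S : 'M[C]_n -> Prop) : Prop :=
  forall X, Aff S X <-> S X.

Definition linmap (n : nat) (Phi : 'M[C]_n -> 'M[C]_n) : Prop :=
  forall (a : C) (A B : 'M[C]_n), Phi (a *: A + B) = a *: Phi A + Phi B.

(* (Phi (x) id_k)(X) for X on C^n (x) C^k, via the block decomposition of X *)
Definition ampliate (n k : nat) (Phi : 'M[C]_n -> 'M[C]_n) (X : 'M[C]_(n * k))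
  : 'M[C]_(n * k) :=
  \sum_(j < k) \sum_(l < k)
    tens (Phi (\matrix_(a, b) X (mxtens.mxtens_index (a, j))
                                (mxtens.mxtens_index (b, l))))
         (delta_mx j l : 'M[C]_k).

Definition CP (n : nat) (Phi : 'M[C]_n -> 'M[C]_n) : Prop :=
  forall (k : nat) (X : 'M[C]_(n * k)), psd X -> psd (@ampliate n k Phi X).

Definition TP (n : nat) (Phi : 'M[C]_n -> 'M[C]_n) : Prop :=
  forall A : 'M[C]_n, \tr (Phi A) = \tr A.

Definition CPTP (n : nat) (Phi : 'M[C]_n -> 'M[C]_n) : Prop :=
  linmap Phi /\ CP Phi /\ TP Phi.

Definition resource_destroying (n : nat) (F : 'M[C]_n -> Prop)
  (Delta : 'M[C]_n -> 'M[C]_n) : Prop :=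
  CPTP Delta /\ (forall rho, density rho -> F (Delta rho)) /\
  (forall sigma, F sigma -> Delta sigma = sigma).

Definition unitary_group (d : nat) (I : finType) (U : I -> 'M[C]_d) : Prop :=
  injective U /\ (forall a, U a \is unitarymx) /\
  (exists a, U a = 1%:M) /\
  (forall a b, exists c, U c = U a *m U b) /\
  (forall a, exists c, U c = dag (U a)).

Definition twirl (d : nat) (I : finType) (U : I -> 'M[C]_d) (rho : 'M[C]_d)
  : 'M[C]_d :=
  (#|I|%:R)^-1 *: \sum_(a : I) (U a *m rho *m dag (U a)).

Definition twirlN (d : nat) (I : finType) (U : I -> 'M[C]_d) (N : nat)
  (rho : 'M[C]_(dpow d N)) : 'M[C]_(dpow d N) :=
  ((#|I| ^ N)%:R)^-1 *:
    \sum_(t : N.-tuple I)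
      (tensTup (map_tuple U t) *m rho *m dag (tensTup (map_tuple U t))).

End QDefs.

(* The twirl is an average of unitary conjugations, hence completely positive
   and trace preserving, and it is idempotent because left multiplication by a
   group element permutes the group.  So F(A) is the set of states in the image
   of a linear idempotent map, which makes it affine and the twirl resource
   destroying.  For the tensor statement: density operators span all matrices
   and Delta^(N+1) (A (x) B) = Delta(A) (x) Delta^N(B), so every fixed point
   rho of Delta^N is a complex linear combination of elements of F(A)^(x)N.
   These are Hermitian of trace one, as is rho, so replacing the coefficients
   by their real parts gives an affine combination. *)

From mathcomp Require Import all_boot all_order all_algebra.
From mathcomp Require Import sesquilinear spectral.
From mathcomp Require mxtens.
From mathcomp Require Import ring.

Import Order.TTheory GRing.Theory Num.Theory.
Local Open Scope ring_scope.
Set Implicit Arguments.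
Unset Strict Implicit.

Lemma behead_tuple_cons (T : Type) n (x : T) (t : n.-tuple T) :
  behead_tuple (cons_tuple x t) = t.
Proof. exact: val_inj. Qed.

Section Operators.
Variable C : numClosedFieldType.

Lemma dagK m n (A : 'M[C]_(m, n)) : dag (dag A) = A.
Proof. exact: trmxCK. Qed.

Lemma dag_mul m n p (A : 'M[C]_(m, n)) (B : 'M[C]_(n, p)) :
  dag (A *m B) = dag B *m dag A.
Proof. by rewrite /dag trmx_mul map_mxM. Qed.

Lemma dag1 n : dag (1%:M : 'M[C]_n) = 1%:M.
Proof. by rewrite /dag trmx1 map_mx1. Qed.

Lemma dag0 m n : dag (0 : 'M[C]_(m, n)) = 0.
Proof. by apply/matrixP=> i j; rewrite !mxE rmorph0. Qed.

Lemma dagD m n (A B : 'M[C]_(m, n)) : dag (A + B) = dag A + dag B.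
Proof. by apply/matrixP=> i j; rewrite !mxE rmorphD. Qed.

Lemma dagZ m n (c : C) (A : 'M[C]_(m, n)) : dag (c *: A) = c^* *: dag A.
Proof. by apply/matrixP=> i j; rewrite !mxE rmorphM. Qed.

Lemma dag_sum m n (T : finType) (F : T -> 'M[C]_(m, n)) :
  dag (\sum_t F t) = \sum_t dag (F t).
Proof.
apply/matrixP=> i j; rewrite !mxE !summxE rmorph_sum.
by apply: eq_bigr => t _; rewrite !mxE.
Qed.

Lemma dag_delta m n (i : 'I_m) (j : 'I_n) :
  dag (delta_mx i j : 'M[C]_(m, n)) = delta_mx j i.
Proof. by apply/matrixP=> a b; rewrite !mxE rmorph_nat andbC. Qed.

Lemma dag_tens m p (A : 'M[C]_m) (B : 'M[C]_p) :
  dag (tens A B) = tens (dag A) (dag B).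
Proof. by apply/matrixP=> i j; rewrite !mxE rmorphM. Qed.

Lemma tens_mul m p (A B : 'M[C]_m) (A' B' : 'M[C]_p) :
  tens A A' *m tens B B' = tens (A *m B) (A' *m B').
Proof. exact: mxtens.tensmx_mul. Qed.

Lemma mxtrace_tens m p (A : 'M[C]_m) (B : 'M[C]_p) :
  \tr (tens A B) = \tr A * \tr B.
Proof.
rewrite /mxtrace mxtens.mulr_sum; apply: eq_bigr => i _.
by rewrite !mxE.
Qed.

Lemma mxtrace_sum n (T : finType) (F : T -> 'M[C]_n) :
  \tr (\sum_t F t) = \sum_t \tr (F t).
Proof. exact: raddf_sum. Qed.

Lemma tensZl m p (c : C) (A : 'M[C]_m) (B : 'M[C]_p) :
  tens (c *: A) B = c *: tens A B.
Proof. by apply/matrixP=> i j; rewrite !mxE mulrA. Qed.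

Lemma tensZr m p (c : C) (A : 'M[C]_m) (B : 'M[C]_p) :
  tens A (c *: B) = c *: tens A B.
Proof. by apply/matrixP=> i j; rewrite !mxE mulrCA. Qed.

Lemma tens_suml m p (T : finType) (F : T -> 'M[C]_m) (B : 'M[C]_p) :
  tens (\sum_t F t) B = \sum_t tens (F t) B.
Proof.
apply/matrixP=> i j; rewrite !mxE !summxE mulr_suml.
by apply: eq_bigr => t _; rewrite !mxE.
Qed.

Lemma tens_sumr m p (T : finType) (A : 'M[C]_m) (F : T -> 'M[C]_p) :
  tens A (\sum_t F t) = \sum_t tens A (F t).
Proof.
apply/matrixP=> i j; rewrite !mxE !summxE mulr_sumr.
by apply: eq_bigr => t _; rewrite !mxE.
Qed.

Lemma delta_mx_tens m p (i j : 'I_(m * p)) :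
  (delta_mx i j : 'M[C]_(m * p)) =
  tens (delta_mx (mxtens.mxtens_unindex i).1 (mxtens.mxtens_unindex j).1)
       (delta_mx (mxtens.mxtens_unindex i).2 (mxtens.mxtens_unindex j).2).
Proof.
apply/matrixP=> a b; rewrite !mxE -natrM mulnb; congr (_%:R).
rewrite -(can_eq (@mxtens.mxtens_unindexK m p) a i).
rewrite -(can_eq (@mxtens.mxtens_unindexK m p) b j).
move: (mxtens.mxtens_unindex a) (mxtens.mxtens_unindex b)
  (mxtens.mxtens_unindex i) (mxtens.mxtens_unindex j) => [? ?] [? ?] [? ?] [? ?] /=.
by rewrite !xpair_eqE andbACA.
Qed.

Lemma sum_tens_blocks n k (X : 'M[C]_(n * k)) :
  \sum_(j < k) \sum_(l < k)
    tens (\matrix_(a, b) X (mxtens.mxtens_index (a, j))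
                           (mxtens.mxtens_index (b, l)))
         (delta_mx j l : 'M[C]_k) = X.
Proof.
apply/matrixP=> i i'.
case: (mxtens.mxtens_indexP i) => a j0; case: (mxtens.mxtens_indexP i') => b l0.
rewrite summxE (bigD1 j0) //= [X in _ + X]big1; last first.
  move=> j hj; rewrite summxE big1 // => l _.
  by rewrite /tens mxtens.tensmxE !mxE eq_sym (negbTE hj) mulr0.
rewrite addr0 summxE (bigD1 l0) //= [X in _ + X]big1; last first.
  move=> l hl.
  by rewrite /tens mxtens.tensmxE !mxE [l0 == _]eq_sym (negbTE hl) andbF mulr0.
by rewrite /tens mxtens.tensmxE !mxE !eqxx mulr1 !addr0.
Qed.

Lemma tensTup_cons d N (x : 'M[C]_d) (t : N.-tuple 'M[C]_d) :
  tensTup (cons_tuple x t) = tens x (tensTup t).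
Proof. by rewrite /= theadE behead_tuple_cons. Qed.

Lemma psd0 n : psd (0 : 'M[C]_n).
Proof. by split; [exact: dag0 | move=> v; rewrite mulmx0 mul0mx mxE]. Qed.

Lemma psdD n (A B : 'M[C]_n) : psd A -> psd B -> psd (A + B).
Proof.
move=> [hA qA] [hB qB]; split; first by rewrite dagD hA hB.
by move=> v; rewrite mulmxDr mulmxDl mxE addr_ge0.
Qed.

Lemma psdZ n (c : C) (A : 'M[C]_n) : 0 <= c -> psd A -> psd (c *: A).
Proof.
move=> c0 [hA qA]; split; first by rewrite dagZ hA conj_Creal // ger0_real.
by move=> v; rewrite -scalemxAr -scalemxAl mxE mulr_ge0.
Qed.

Lemma psd_sum n (T : finType) (F : T -> 'M[C]_n) :
  (forall t, psd (F t)) -> psd (\sum_t F t).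
Proof. by move=> H; apply: (big_ind (@psd C n)); [exact: psd0 | exact: psdD |]. Qed.

Lemma psd_conj m n (M : 'M[C]_(m, n)) (A : 'M[C]_n) : psd A -> psd (M *m A *m dag M).
Proof.
move=> [hA qA]; split; first by rewrite !dag_mul dagK hA mulmxA.
by move=> v; have := qA (v *m M); rewrite dag_mul !mulmxA.
Qed.

Lemma psd_gram m n (M : 'M[C]_(m, n)) : psd (dag M *m M).
Proof.
split; first by rewrite dag_mul dagK.
move=> v; have -> : v *m (dag M *m M) *m dag v = (v *m dag M) *m dag (v *m dag M).
  by rewrite dag_mul dagK !mulmxA.
by rewrite -dotmxE; apply: dnorm_ge0.
Qed.

Lemma linmap0 n (f : 'M[C]_n -> 'M[C]_n) : linmap f -> f 0 = 0.
Proof.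
move=> lf; have := lf 1 0 0.
by rewrite !scale1r addr0 -{1}[f 0]addr0 => /addrI.
Qed.

Lemma linmap_sum n (f : 'M[C]_n -> 'M[C]_n) (T : finType) (c : T -> C)
    (F : T -> 'M[C]_n) :
  linmap f -> f (\sum_t c t *: F t) = \sum_t c t *: f (F t).
Proof.
move=> lf; apply: (big_rec2 (fun x y => f x = y)); first exact: linmap0.
by move=> t Y Y' _ <-; apply: lf.
Qed.

Lemma conj_tens1 n k (A : 'M[C]_n) (Y : 'M[C]_(n * k)) :
  tens A 1%:M *m Y *m dag (tens A 1%:M) =
  \sum_(j < k) \sum_(l < k)
    tens (A *m (\matrix_(a, b) Y (mxtens.mxtens_index (a, j))
                                  (mxtens.mxtens_index (b, l))) *m dag A)
         (delta_mx j l : 'M[C]_k).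
Proof.
rewrite -{1}[Y]sum_tens_blocks dag_tens dag1 mulmx_sumr mulmx_suml.
apply: eq_bigr => j _; rewrite mulmx_sumr mulmx_suml; apply: eq_bigr => l _.
by rewrite !tens_mul mul1mx mulmx1.
Qed.

Section ConjugationSum.
Variables (n : nat) (T : finType) (c : C) (M : T -> 'M[C]_n).
Let Phi (X : 'M[C]_n) := c *: \sum_t (M t *m X *m dag (M t)).

Lemma linmap_conj_sum : linmap Phi.
Proof.
move=> a A B; rewrite /Phi scalerA mulrC -scalerA -scalerDr; congr (_ *: _).
rewrite scaler_sumr -big_split.
by apply: eq_bigr => t _; rewrite mulmxDr mulmxDl -scalemxAr -scalemxAl.
Qed.

Lemma ampliate_conj_sum k (Y : 'M[C]_(n * k)) :
  ampliate Phi Y = c *: \sum_t (tens (M t) 1%:M *m Y *m dag (tens (M t) 1%:M)).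
Proof.
rewrite /ampliate /Phi (eq_bigr _ (fun t _ => conj_tens1 (M t) Y)).
rewrite [in RHS]exchange_big scaler_sumr; apply: eq_bigr => j _.
rewrite [in RHS]exchange_big scaler_sumr; apply: eq_bigr => l _.
by rewrite tensZl tens_suml.
Qed.

Lemma CP_conj_sum : 0 <= c -> CP Phi.
Proof.
move=> c_ge0 k X hX; rewrite ampliate_conj_sum; apply: psdZ => //.
by apply: psd_sum => t; apply: psd_conj.
Qed.

End ConjugationSum.

Section Twirl.
Variables (d : nat) (I : finType) (U : I -> 'M[C]_d).
Hypothesis HU : unitary_group U.

Lemma unitary_group_mulVmx a : dag (U a) *m U a = 1%:M.
Proof. by case: HU => _ [hu _]; rewrite -[dag _]mul1mx mulmxKtV. Qed.

Lemma unitary_group_card_neq0 : (#|I|%:R : C) != 0.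
Proof.
by case: HU => _ [_ [[a _] _]]; rewrite pnatr_eq0 -lt0n; apply/card_gt0P; exists a.
Qed.

Lemma linmap_twirl : linmap (twirl U).
Proof. exact: linmap_conj_sum. Qed.

Lemma CP_twirl : CP (twirl U).
Proof. by apply: CP_conj_sum; rewrite invr_ge0 ler0n. Qed.

Lemma mxtrace_twirl A : \tr (twirl U A) = \tr A.
Proof.
rewrite /twirl mxtraceZ mxtrace_sum.
under eq_bigr => a _ do rewrite mxtrace_mulC mulmxA unitary_group_mulVmx mul1mx.
by rewrite sumr_const -(mulr_natl (\tr A)) mulrA mulVf ?mul1r // unitary_group_card_neq0.
Qed.

Lemma CPTP_twirl : CPTP (twirl U).
Proof.
split; first exact: linmap_twirl.
by split; [exact: CP_twirl | exact: mxtrace_twirl].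
Qed.

Lemma density_twirl A : density A -> density (twirl U A).
Proof.
move=> [hA tA]; split; last by rewrite mxtrace_twirl.
apply: psdZ; first by rewrite invr_ge0 ler0n.
by apply: psd_sum => a; apply: psd_conj.
Qed.

Lemma conj_twirl a A : U a *m twirl U A *m dag (U a) = twirl U A.
Proof.
rewrite /twirl -scalemxAr -scalemxAl mulmx_sumr mulmx_suml; congr (_ *: _).
(* Left multiplication by U a permutes the group, giving a reindexing of I. *)
pose g b := odflt b [pick c | U c == U a *m U b].
have gE b : U (g b) = U a *m U b.
  rewrite /g; case: pickP => [c /eqP -> //| H] /=.
  case: HU => _ [_ [_ [hm _]]]; have [c hc] := hm a b.
  by have := H c; rewrite hc eqxx.
have g_inj : injective g.
  move=> b b' e; case: HU => U_inj _; apply: U_inj.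
  have := gE b; rewrite e gE => /(congr1 (mulmx (dag (U a)))).
  by rewrite !mulmxA unitary_group_mulVmx !mul1mx.
rewrite [RHS](reindex_inj g_inj); apply: eq_bigr => b _.
by rewrite gE dag_mul !mulmxA.
Qed.

Lemma twirl_idem A : twirl U (twirl U A) = twirl U A.
Proof.
rewrite {1}/twirl; under eq_bigr => a _ do rewrite conj_twirl.
by rewrite sumr_const -scaler_nat scalerA mulVf ?scale1r // unitary_group_card_neq0.
Qed.

End Twirl.

Lemma affine_image n (Phi : 'M[C]_n -> 'M[C]_n) :
  linmap Phi -> (forall rho, density rho -> density (Phi rho)) ->
  (forall A, Phi (Phi A) = Phi A) ->
  affine (fun sigma => exists rho, density rho /\ sigma = Phi rho).
Proof.
move=> lin dens idem X; split.
  move=> [hX [k [c [s [_ [hs [_ eX]]]]]]]; exists X; split => //.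
  rewrite eX linmap_sum //; apply: eq_bigr => i _.
  by have [r [_ ->]] := hs i; rewrite idem.
move=> [rho [hrho ->]]; split; first exact: dens.
exists 1%N, (fun=> 1), (fun=> Phi rho); split; first by move=> i; exact: rpred1.
split; first by move=> i; exists rho.
by rewrite !big_ord1 scale1r.
Qed.

Definition cspan n (S : 'M[C]_n -> Prop) (X : 'M[C]_n) : Prop :=
  exists k (c : 'I_k -> C) (s : 'I_k -> 'M[C]_n),
    (forall i, S (s i)) /\ X = \sum_i c i *: s i.

Section Span.
Variables (n : nat) (S : 'M[C]_n -> Prop).

Lemma cspan0 : cspan S 0.
Proof. by exists 0%N, (fun=> 0), (fun=> 0); split; [case | rewrite big_ord0]. Qed.

Lemma cspan_in X : S X -> cspan S X.
Proof. by move=> h; exists 1%N, (fun=> 1), (fun=> X); rewrite big_ord1 scale1r. Qed.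

Lemma cspanD X Y : cspan S X -> cspan S Y -> cspan S (X + Y).
Proof.
move=> [k1 [c1 [s1 [h1 ->]]]] [k2 [c2 [s2 [h2 ->]]]].
exists (k1 + k2)%N, (fun i => match split i with inl a => c1 a | inr b => c2 b end),
  (fun i => match split i with inl a => s1 a | inr b => s2 b end); split.
  by move=> i; case: (split i).
rewrite big_split_ord; congr (_ + _); apply: eq_bigr => i _.
  by rewrite (unsplitK (inl i : 'I_k1 + 'I_k2)).
by rewrite (unsplitK (inr i : 'I_k1 + 'I_k2)).
Qed.

Lemma cspanZ a X : cspan S X -> cspan S (a *: X).
Proof.
move=> [k [c [s [h ->]]]]; exists k, (fun i => a * c i), s; split => //.
by rewrite scaler_sumr; apply: eq_bigr => i _; rewrite scalerA.
Qed.

Lemma cspanB X Y : cspan S X -> cspan S Y -> cspan S (X - Y).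
Proof. by move=> hX hY; rewrite -scaleN1r; apply: cspanD => //; apply: cspanZ. Qed.

Lemma cspan_sum (T : finType) (F : T -> 'M[C]_n) :
  (forall t, cspan S (F t)) -> cspan S (\sum_t F t).
Proof. by move=> H; apply: (big_ind (cspan S)); [exact: cspan0 | exact: cspanD |]. Qed.

Lemma cspan_cspan X : cspan (cspan S) X -> cspan S X.
Proof. by move=> [k [c [s [h ->]]]]; apply: cspan_sum => i; apply: cspanZ. Qed.

Lemma cspan_linmap (S' : 'M[C]_n -> Prop) (f : 'M[C]_n -> 'M[C]_n) X :
  linmap f -> (forall Y, S Y -> S' (f Y)) -> cspan S X -> cspan S' (f X).
Proof.
move=> lf hf [k [c [s [h ->]]]]; exists k, c, (fun i => f (s i)).
by split; [move=> i; apply: hf | apply: linmap_sum].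
Qed.

End Span.

Lemma cspan_density_gram n (v : 'rV[C]_n) : cspan (@density C n) (dag v *m v).
Proof.
have [->|v_neq0] := eqVneq v 0; first by rewrite mulmx0; apply: cspan0.
have tr_gt0 : 0 < \tr (dag v *m v).
  by rewrite mxtrace_mulC trace_mx11 -dotmxE dnorm_gt0.
have tr_neq0 : \tr (dag v *m v) != 0 by rewrite gt_eqF.
rewrite -[dag v *m v]scale1r -(mulfV tr_neq0) -scalerA; apply/cspanZ/cspan_in.
split; last by rewrite mxtraceZ mulVf.
by apply: psdZ; [rewrite invr_ge0 ltW | apply: psd_gram].
Qed.

Lemma polarization n (x y : 'rV[C]_n) (c : C) :
  (c^* - c) *: (dag x *m y) =
  c^* *: (dag (x + y) *m (x + y) - dag x *m x - dag y *m y)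
  - (dag (x + c *: y) *m (x + c *: y) - dag x *m x - (c^* * c) *: (dag y *m y)).
Proof.
apply/matrixP=> a b; rewrite !mxE !big_ord1 !mxE !rmorphD !rmorphM /=.
ring.
Qed.

Lemma cspan_density_outer n (x y : 'rV[C]_n) : cspan (@density C n) (dag x *m y).
Proof.
have i_neq0 : 'i^* - 'i != 0 :> C.
  by rewrite conjCi -opprD oppr_eq0 -mulr2n mulrn_eq0 negb_or neq0Ci.
rewrite -[dag x *m y]scale1r -(mulVf i_neq0) -scalerA polarization.
do !(apply: cspanZ || apply: cspanB); exact: cspan_density_gram.
Qed.

Lemma cspan_density n (A : 'M[C]_n) : cspan (@density C n) A.
Proof.
rewrite [A]matrix_sum_delta; apply: cspan_sum => i; apply: cspan_sum => j.
have -> : delta_mx i j = dag (delta_mx 0 i) *m (delta_mx 0 j : 'rV[C]_n).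
  by rewrite dag_delta mul_delta_mx.
by apply: cspanZ; apply: cspan_density_outer.
Qed.

Lemma cspan_tens_products m p (X : 'M[C]_(m * p)) :
  cspan (fun Y => exists (A : 'M[C]_m) (B : 'M[C]_p), Y = tens A B) X.
Proof.
rewrite [X]matrix_sum_delta; apply: cspan_sum => i; apply: cspan_sum => j.
by apply/cspanZ/cspan_in; do 2 eexists; apply: delta_mx_tens.
Qed.

Lemma cspan_tensPowSetS d N (S : 'M[C]_d -> Prop) A (B : 'M[C]_(dpow d N)) :
  cspan S A -> cspan (tensPowSet (N:=N) S) B ->
  cspan (tensPowSet (N:=N.+1) S) (tens A B).
Proof.
move=> [k [c [s [hs ->]]]] [k' [e [r [hr ->]]]].
rewrite tens_suml; apply: cspan_sum => i; rewrite tensZl tens_sumr.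
apply/cspanZ/cspan_sum => j; rewrite tensZr; apply/cspanZ/cspan_in.
have [t [ht ->]] := hr j; exists (cons_tuple (s i) t).
split; last by rewrite tensTup_cons.
by move=> l; case: (unliftP ord0 l) => [l' ->|->]; [rewrite tnthS | rewrite tnth0].
Qed.

Lemma tensTup_herm_tr1 d N (t : N.-tuple 'M[C]_d) :
  (forall i, dag (tnth t i) = tnth t i /\ \tr (tnth t i) = 1) ->
  dag (tensTup t) = tensTup t /\ \tr (tensTup t) = 1.
Proof.
elim: N t => [|N IH] t H /=; first by rewrite dag1 mxtrace1.
have [h1 h2] := H ord0.
have [h3 h4] : dag (tensTup (behead_tuple t)) = tensTup (behead_tuple t) /\
               \tr (tensTup (behead_tuple t)) = 1.
  by apply: IH => i; rewrite tnth_behead; apply: H.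
by rewrite dag_tens mxtrace_tens h3 h4 /thead h1 h2 mulr1.
Qed.

(* A Hermitian X = \sum_i c_i s_i with Hermitian s_i also equals \sum_i c_i^* s_i,
   hence the real combination with coefficients Re c_i. *)
Lemma Aff_cspan_herm_tr1 n (S : 'M[C]_n -> Prop) X :
  (forall s, S s -> dag s = s /\ \tr s = 1) -> density X -> cspan S X -> Aff S X.
Proof.
move=> hS hX [k [c [s [hs eX]]]].
have sum_c : \sum_i c i = 1.
  case: hX => _ <-; rewrite eX mxtrace_sum; apply: eq_bigr => i _.
  by rewrite mxtraceZ (hS _ (hs i)).2 mulr1.
have eX' : X = \sum_i (c i)^* *: s i.
  case: hX => [[hd _] _]; rewrite -{1}hd eX dag_sum; apply: eq_bigr => i _.
  by rewrite dagZ (hS _ (hs i)).1.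
split=> //; exists k, (fun i => (c i + (c i)^*) / 2), s; split.
  by move=> i; rewrite -ReE Creal_Re.
split=> //; split.
  rewrite -mulr_suml big_split /= -rmorph_sum sum_c rmorph1.
  by rewrite -mulr2n divff // pnatr_eq0.
under eq_bigr => i _ do rewrite mulrDl scalerDl -!(mulrC 2^-1) -!scalerA -scalerDr.
rewrite -scaler_sumr big_split -eX -eX' /=.
by rewrite -mulr2n -scaler_nat scalerA mulVf ?scale1r // pnatr_eq0.
Qed.

Section TwirlTensor.
Variables (d : nat) (I : finType) (U : I -> 'M[C]_d).
Let F sigma := exists rho, density rho /\ sigma = twirl U rho.

Lemma cspan_twirl A : cspan F (twirl U A).
Proof.
apply: (cspan_linmap (S := @density C d)); [exact: linmap_twirl | | exact: cspan_density].
by move=> Y hY; exists Y.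
Qed.

Lemma twirlN0 (Y : 'M[C]_(dpow d 0)) : twirlN U Y = Y.
Proof.
rewrite /twirlN /=; under eq_bigr => t _ do rewrite dag1 mul1mx mulmx1.
by rewrite sumr_const card_tuple !expn0 invr1 scale1r.
Qed.

Lemma twirlN_tens N (A : 'M[C]_d) (Y : 'M[C]_(dpow d N)) :
  twirlN U (N := N.+1) (tens A Y) = tens (twirl U A) (twirlN U Y).
Proof.
rewrite /twirlN /twirl tensZl tensZr scalerA -invfM -natrM -expnS.
congr (_ *: _); rewrite tens_suml.
under [RHS]eq_bigr => a _ do rewrite tens_sumr.
rewrite [RHS]pair_bigA /=.
rewrite (reindex (fun p : I * N.-tuple I => cons_tuple p.1 p.2)) /=; last first.
  exists (fun t : N.+1.-tuple I => (thead t, behead_tuple t)) => [[x t] _|t _] /=.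
    by rewrite theadE behead_tuple_cons.
  by rewrite [in RHS](tuple_eta t).
apply: eq_bigr => -[a t] _ /=.
have -> : map_tuple U (cons_tuple a t) = cons_tuple (U a) (map_tuple U t).
  exact: val_inj.
by rewrite theadE behead_tuple_cons dag_tens !tens_mul.
Qed.

Lemma cspan_twirlN N (Y : 'M[C]_(dpow d N)) : cspan (tensPowSet (N:=N) F) (twirlN U Y).
Proof.
elim: N Y => [|N IH] Y.
  rewrite twirlN0 [Y]mx11_scalar -scalemx1; apply/cspanZ/cspan_in.
  by exists [tuple]; split => //; case.
apply/cspan_cspan/(cspan_linmap _ _ (cspan_tens_products Y)).
  exact: linmap_conj_sum.
move=> M [A [B ->]]; rewrite twirlN_tens.
by apply: cspan_tensPowSetS; [exact: cspan_twirl | exact: IH].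
Qed.

End TwirlTensor.

End Operators.

Theorem mainTheorem5 (C : numClosedFieldType) (d : nat) (I : finType)
  (U : I -> 'M[C]_d) :
  unitary_group U ->
  let Delta := twirl U in
  let F := fun sigma : 'M[C]_d => exists rho, density rho /\ sigma = Delta rho in
  affine F /\ resource_destroying F Delta /\
  forall N : nat, (0 < N)%N ->
    ~ (exists rho : 'M[C]_(dpow d N),
         density rho /\ ~ Aff (@tensPowSet C d N F) rho /\ @twirlN C d I U N rho = rho).
Proof.
move=> HU; cbv zeta; split.
  exact: affine_image (linmap_twirl _) (density_twirl HU) (twirl_idem HU).
split.
  split; first exact: CPTP_twirl.
  split; first by move=> rho hrho; exists rho.
  by move=> _ [rho [_ ->]]; rewrite twirl_idem.
move=> N _ [rho [hrho [not_free fixed]]]; apply: not_free.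
apply: Aff_cspan_herm_tr1 => //; last by rewrite -fixed; apply: cspan_twirlN.
move=> _ [t [ht ->]]; apply: tensTup_herm_tr1 => i.
have [r [hr ->]] := ht i; split; last by rewrite mxtrace_twirl; case: hr.
by have [[]] := density_twirl HU hr.
Qed.
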